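(* $(\mathcal{D}, \delta, \varepsilon)$ is a comonad on $\mathsf{CLAC}$.
   Context: Composition is written in diagrammatic order ($fg$ means first $f$, then $g$). A left additive category is a category whose hom-sets are commutative monoids with $f(g+h)=fg+fh$ and $f0=0$; a map $h$ is additive if $(f+g)h=fh+gh$ and $0h=0$. A Cartesian left additive category is a left additive category with finite products whose projections are additive. $\mathsf{CLAC}$ is the category of Cartesian left additive categories and strict Cartesian left additive functors (functors preserving finite products strictly, i.e. $\mathsf{F}(A\times B)=\mathsf{F}(A)\times\mathsf{F}(B)$, terminal object and projections preserved on the nose, and preserving sums and zeros). For a Cartesian left additive category $\mathbb{X}$, let $\mathsf{P}(A)=A\times A$, $\mathsf{P}(f)=f\times f$. A pre-$\mathsf{D}$-sequence $f_\bullet: A \to B$ is a sequence $(f_0,f_1,\dots)$ with $f_n:\mathsf{P}^n(A)\to B$; for maps $h,k$ of $\mathbb{X}$ set $(h\cdot f_\bullet)_n=\mathsf{P}^n(h)f_n$ and $(f_\bullet\cdot k)_n=f_n k$. The tangent is $\mathsf{T}(f_\bullet)_n=\langle \mathsf{P}^n(\pi_0)f_n, f_{n+1}\rangle$ and the differential is $\mathsf{D}[f_\bullet]_n=f_{n+1}$. Identities are $i_0=1$, $i_n=\pi_1\pi_1\cdots\pi_1$ ($n$ times), composition is $(f_\bullet\ast g_\bullet)_n=\mathsf{T}^n(f_\bullet)_0\, g_n$, sums and zero are pointwise, projections are $i_\bullet\cdot\pi_j$ and pairing is pointwise $\langle f_\bullet,g_\bullet\rangle_n=\langle f_n,g_n\rangle$.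 A $\mathsf{D}$-sequence is a pre-$\mathsf{D}$-sequence such that for all $n$: $\langle 1,0\rangle\cdot\mathsf{D}^{n+1}[f_\bullet]=0_\bullet$; $(1\times(\pi_0+\pi_1))\cdot\mathsf{D}^{n+1}[f_\bullet]=((1\times\pi_0)\cdot\mathsf{D}^{n+1}[f_\bullet])+((1\times\pi_1)\cdot\mathsf{D}^{n+1}[f_\bullet])$; $\ell\cdot\mathsf{D}^{n+2}[f_\bullet]=\mathsf{D}^{n+1}[f_\bullet]$; $c\cdot\mathsf{D}^{n+2}[f_\bullet]=\mathsf{D}^{n+2}[f_\bullet]$, where $\ell=\langle 1,0\rangle\times\langle 0,1\rangle$ and $c=1\times\langle\pi_1,\pi_0\rangle\times 1$. $\mathcal{D}[\mathbb{X}]$ is the Cartesian left additive category of $\mathsf{D}$-sequences of $\mathbb{X}$ (same objects as $\mathbb{X}$). For a strict Cartesian left additive functor $\mathsf{F}$, $\mathcal{D}[\mathsf{F}]$ acts as $\mathsf{F}$ on objects and by $\mathcal{D}[\mathsf{F}](f_\bullet)_n=\mathsf{F}(f_n)$. The counit $\varepsilon:\mathcal{D}[\mathbb{X}]\to\mathbb{X}$ is the identity on objects and $\varepsilon(f_\bullet)=f_0$; the comultiplication $\delta:\mathcal{D}[\mathbb{X}]\to\mathcal{D}[\mathcal{D}[\mathbb{X}]]$ is the identity on objects and $\delta(f_\bullet)_0=f_\bullet$, $\delta(f_\bullet)_n=\mathsf{D}^n[f_\bullet]$. *)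

(* Composition is written in
   diagrammatic order: [comp f g] is "first f, then g". *)

(* The predicate [ok]
   singles out the morphisms that belong to the category (for a plain CLAC
   one may take [ok := fun _ _ _ => True]); all axioms are only required on
   [ok] morphisms.  This is needed so that D[X] (whose maps are the
   D-sequences, a subset of the pre-D-sequences) can be formed as an object
   of the same kind, and iterated (D[D[X]]).                                 *)
Record RawCLAC : Type := {
  Ob : Type;
  Hom : Ob -> Ob -> Type;
  idm : forall A, Hom A A;
  comp : forall A B C, Hom A B -> Hom B C -> Hom A C;
  add : forall A B, Hom A B -> Hom A B -> Hom A B;
  zero : forall A B, Hom A B;
  prod : Ob -> Ob -> Ob;
  term : Ob;
  p0 : forall A B, Hom (prod A B) A;
  p1 : forall A B, Hom (prod A B) B;
  pair : forall C A B, Hom C A -> Hom C B -> Hom C (prod A B);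
  bang : forall A, Hom A term;
  ok : forall A B, Hom A B -> Prop
}.

Arguments idm {_} A.
Arguments comp {_ A B C} f g.
Arguments add {_ A B} f g.
Arguments zero {_ A B}.
Arguments p0 {_} A B.
Arguments p1 {_} A B.
Arguments pair {_ C A B} f g.
Arguments bang {_} A.
Arguments ok {_ A B} f.

Record is_CLAC (X : RawCLAC) : Prop := {
  ok_id : forall A, ok (idm (r:=X) A);
  ok_comp : forall A B C (f : Hom X A B) (g : Hom X B C),
      ok f -> ok g -> ok (comp f g);
  ok_add : forall A B (f g : Hom X A B), ok f -> ok g -> ok (add f g);
  ok_zero : forall A B, ok (@zero X A B);
  ok_p0 : forall A B, ok (@p0 X A B);
  ok_p1 : forall A B, ok (@p1 X A B);
  ok_pair : forall C A B (f : Hom X C A) (g : Hom X C B),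
      ok f -> ok g -> ok (pair f g);
  ok_bang : forall A, ok (@bang X A);
  comp_id_l : forall A B (f : Hom X A B), ok f -> comp (idm A) f = f;
  comp_id_r : forall A B (f : Hom X A B), ok f -> comp f (idm B) = f;
  comp_assoc : forall A B C D (f : Hom X A B) (g : Hom X B C) (h : Hom X C D),
      ok f -> ok g -> ok h -> comp (comp f g) h = comp f (comp g h);
  add_assoc : forall A B (f g h : Hom X A B), ok f -> ok g -> ok h ->
      add (add f g) h = add f (add g h);
  add_comm : forall A B (f g : Hom X A B), ok f -> ok g -> add f g = add g f;
  add_0l : forall A B (f : Hom X A B), ok f -> add zero f = f;
  comp_addr : forall A B C (f : Hom X A B) (g h : Hom X B C),
      ok f -> ok g -> ok h -> comp f (add g h) = add (comp f g) (comp f h);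
  comp_0r : forall A B C (f : Hom X A B), ok f -> comp f (@zero X B C) = zero;
  pair_p0 : forall C A B (f : Hom X C A) (g : Hom X C B),
      ok f -> ok g -> comp (pair f g) (p0 A B) = f;
  pair_p1 : forall C A B (f : Hom X C A) (g : Hom X C B),
      ok f -> ok g -> comp (pair f g) (p1 A B) = g;
  pair_eta : forall C A B (h : Hom X C (prod X A B)),
      ok h -> pair (comp h (p0 A B)) (comp h (p1 A B)) = h;
  bang_uniq : forall A (h : Hom X A (term X)), ok h -> h = bang A;
  p0_add : forall C A B (f g : Hom X C (prod X A B)), ok f -> ok g ->
      comp (add f g) (p0 A B) = add (comp f (p0 A B)) (comp g (p0 A B));
  p0_zero : forall C A B, comp (@zero X C (prod X A B)) (p0 A B) = zero;
  p1_add : forall C A B (f g : Hom X C (prod X A B)), ok f -> ok g ->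
      comp (add f g) (p1 A B) = add (comp f (p1 A B)) (comp g (p1 A B));
  p1_zero : forall C A B, comp (@zero X C (prod X A B)) (p1 A B) = zero
}.

Definition castH {R : RawCLAC} {A A' B B' : Ob R} (eA : A = A') (eB : B = B')
  (f : Hom R A B) : Hom R A' B' :=
  match eA in _ = Z return Hom R Z B' with
  | eq_refl => match eB in _ = W return Hom R A W with eq_refl => f end
  end.

Section Seq.
Variable R : RawCLAC.

Definition P (A : Ob R) : Ob R := prod R A A.
Definition cross {A B A' B' : Ob R} (f : Hom R A A') (g : Hom R B B')
  : Hom R (prod R A B) (prod R A' B') :=
  pair (comp (p0 A B) f) (comp (p1 A B) g).
Definition Pm {A B : Ob R} (f : Hom R A B) : Hom R (P A) (P B) := cross f f.

Fixpoint Pn (n : nat) (A : Ob R) : Ob R :=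
  match n with 0 => A | S m => Pn m (P A) end.
Fixpoint Pnm (n : nat) {A B : Ob R} (f : Hom R A B) : Hom R (Pn n A) (Pn n B) :=
  match n return Hom R (Pn n A) (Pn n B) with
  | 0 => f | S m => Pnm m (Pm f) end.
Fixpoint PnS (n : nat) (A : Ob R) : Pn (S n) A = P (Pn n A) :=
  match n as k return Pn (S k) A = P (Pn k A) with
  | 0 => eq_refl
  | S m => PnS m (P A)
  end.

Definition preseq (A B : Ob R) : Type := forall n : nat, Hom R (Pn n A) B.

Definition castps {A A' B : Ob R} (e : A = A') (g : preseq A B) : preseq A' B :=
  match e in _ = Z return preseq Z B with eq_refl => g end.

Definition lact {A' A B : Ob R} (h : Hom R A' A) (g : preseq A B) : preseq A' B :=
  fun n => comp (Pnm n h) (g n).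
Definition ract {A B C : Ob R} (g : preseq A B) (k : Hom R B C) : preseq A C :=
  fun n => comp (g n) k.
Definition addps {A B : Ob R} (f g : preseq A B) : preseq A B :=
  fun n => add (f n) (g n).
Definition zerops {A B : Ob R} : preseq A B := fun n => zero.

Definition Tps {A B : Ob R} (f : preseq A B) : preseq (P A) (P B) :=
  fun n => pair (comp (Pnm n (p0 A A)) (f n)) (f (S n)).
Fixpoint Tn (n : nat) {A B : Ob R} (f : preseq A B) : preseq (Pn n A) (Pn n B) :=
  match n return preseq (Pn n A) (Pn n B) with
  | 0 => f | S m => Tn m (Tps f) end.

Definition Dps {A B : Ob R} (f : preseq A B) : preseq (P A) B :=
  fun n => f (S n).
Fixpoint Dn (n : nat) {A B : Ob R} (f : preseq A B) : preseq (Pn n A) B :=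
  match n return preseq (Pn n A) B with
  | 0 => f | S m => Dn m (Dps f) end.

Fixpoint iseq (n : nat) (A : Ob R) : Hom R (Pn n A) A :=
  match n return Hom R (Pn n A) A with
  | 0 => idm A
  | S m => comp (iseq m (P A)) (p1 A A)
  end.

Definition compps {A B C : Ob R} (f : preseq A B) (g : preseq B C) : preseq A C :=
  fun n => comp (Tn n f 0) (g n).

(* the maps l = <1,0> x <0,1> and c = 1 x <pi_1,pi_0> x 1 (middle swap
   ((a,b),(c,d)) |-> ((a,c),(b,d)) on P(P(Y)) = (Y x Y) x (Y x Y)) *)
Definition ellmap (Y : Ob R) : Hom R (P Y) (P (P Y)) :=
  cross (pair (idm Y) zero) (pair zero (idm Y)).
Definition cmap (Y : Ob R) : Hom R (P (P Y)) (P (P Y)) :=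
  pair (pair (comp (p0 (P Y) (P Y)) (p0 Y Y)) (comp (p1 (P Y) (P Y)) (p0 Y Y)))
       (pair (comp (p0 (P Y) (P Y)) (p1 Y Y)) (comp (p1 (P Y) (P Y)) (p1 Y Y))).

(* D-sequence axioms.  D^{n+1}[f] : P^{n+1}(A) = P(P^n(A)) -> B and
   D^{n+2}[f] : P^{n+2}(A) = P(P(P^n(A))) -> B. *)
Definition Dseq {A B : Ob R} (f : preseq A B) : Prop :=
  forall n : nat,
    let Y := Pn n A in
    let D1 : preseq (P Y) B := castps (PnS n A) (Dn (S n) f) in
    let D2 : preseq (P (P Y)) B :=
      castps (eq_trans (PnS (S n) A) (f_equal P (PnS n A))) (Dn (S (S n)) f) in
    lact (pair (idm Y) zero) D1 = zerops
    /\ lact (cross (idm Y) (add (p0 Y Y) (p1 Y Y))) D1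
       = addps (lact (cross (idm Y) (p0 Y Y)) D1)
               (lact (cross (idm Y) (p1 Y Y)) D1)
    /\ lact (ellmap Y) D2 = D1
    /\ lact (cmap Y) D2 = D2.

Definition okD {A B : Ob R} (f : preseq A B) : Prop :=
  (forall n, ok (f n)) /\ Dseq f.

End Seq.

Arguments P {R} A.
Arguments Pn {R} n A.
Arguments Pnm {R} n {A B} f.
Arguments PnS {R} n A.
Arguments iseq {R} n A.
Arguments Dn {R} n {A B} f.

Definition Dc (X : RawCLAC) : RawCLAC := {|
  Ob := Ob X;
  Hom := preseq X;
  idm := fun A n => iseq n A;
  comp := fun A B C f g => compps X f g;
  add := fun A B f g => addps X f g;
  zero := fun A B => zerops X;
  prod := prod X;
  term := term X;
  p0 := fun A B n => comp (iseq n (prod X A B)) (p0 A B);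
  p1 := fun A B n => comp (iseq n (prod X A B)) (p1 A B);
  pair := fun C A B f g n => pair (f n) (g n);
  bang := fun A n => bang (Pn n A);
  ok := fun A B f => okD X f
|}.

Record RawFun (X Y : RawCLAC) : Type := {
  Fo : Ob X -> Ob Y;
  Fm : forall A B, Hom X A B -> Hom Y (Fo A) (Fo B);
  Fprod : forall A B, Fo (prod X A B) = prod Y (Fo A) (Fo B);
  Fterm : Fo (term X) = term Y
}.
Arguments Fo {X Y} _ A.
Arguments Fm {X Y} _ {A B} _.
Arguments Fprod {X Y} _ A B.
Arguments Fterm {X Y} _.

Record is_sfun {X Y : RawCLAC} (F : RawFun X Y) : Prop := {
  fm_ok : forall A B (f : Hom X A B), ok f -> ok (Fm F f);
  fm_id : forall A, Fm F (idm A) = idm (Fo F A);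
  fm_comp : forall A B C (f : Hom X A B) (g : Hom X B C), ok f -> ok g ->
      Fm F (comp f g) = comp (Fm F f) (Fm F g);
  fm_add : forall A B (f g : Hom X A B), ok f -> ok g ->
      Fm F (add f g) = add (Fm F f) (Fm F g);
  fm_zero : forall A B, Fm F (@zero X A B) = zero;
  fm_p0 : forall A B, castH (Fprod F A B) eq_refl (Fm F (p0 A B))
                      = p0 (Fo F A) (Fo F B);
  fm_p1 : forall A B, castH (Fprod F A B) eq_refl (Fm F (p1 A B))
                      = p1 (Fo F A) (Fo F B)
}.

Definition idF (X : RawCLAC) : RawFun X X := {|
  Fo := fun A => A;
  Fm := fun A B f => f;
  Fprod := fun A B => eq_refl;
  Fterm := eq_refl
|}.

Definition compF {X Y Z : RawCLAC} (F : RawFun X Y) (G : RawFun Y Z) : RawFun X Z := {|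
  Fo := fun A => Fo G (Fo F A);
  Fm := fun A B f => Fm G (Fm F f);
  Fprod := fun A B => eq_trans (f_equal (Fo G) (Fprod F A B)) (Fprod G (Fo F A) (Fo F B));
  Fterm := eq_trans (f_equal (Fo G) (Fterm F)) (Fterm G)
|}.

Definition feq {X Y : RawCLAC} (F G : RawFun X Y) : Prop :=
  exists eo : forall A, Fo F A = Fo G A,
    forall A B (f : Hom X A B), ok f -> castH (eo A) (eo B) (Fm F f) = Fm G f.

Fixpoint FPn {X Y : RawCLAC} (F : RawFun X Y) (n : nat) (A : Ob X)
  : Fo F (Pn n A) = Pn n (Fo F A) :=
  match n as k return Fo F (Pn k A) = Pn k (Fo F A) with
  | 0 => eq_refl
  | S m => eq_trans (FPn F m (P A)) (f_equal (fun Z => Pn m Z) (Fprod F A A))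
  end.

Definition DF {X Y : RawCLAC} (F : RawFun X Y) : RawFun (Dc X) (Dc Y) :=
  @Build_RawFun (Dc X) (Dc Y) (Fo F)
    (fun A B (f : preseq X A B) n => castH (FPn F n A) eq_refl (Fm F (f n)))
    (Fprod F) (Fterm F).

Definition eps (X : RawCLAC) : RawFun (Dc X) X :=
  @Build_RawFun (Dc X) X (fun A => A)
    (fun A B (f : preseq X A B) => f 0)
    (fun A B => eq_refl) eq_refl.

Definition delta (X : RawCLAC) : RawFun (Dc X) (Dc (Dc X)) :=
  @Build_RawFun (Dc X) (Dc (Dc X)) (fun A => A)
    (fun A B (f : preseq X A B) n => Dn n f)
    (fun A B => eq_refl) eq_refl.

Definition is_comonad_on_CLAC
  (T : RawCLAC -> RawCLAC)
  (TF : forall X Y : RawCLAC, RawFun X Y -> RawFun (T X) (T Y))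
  (ep : forall X, RawFun (T X) X)
  (de : forall X, RawFun (T X) (T (T X))) : Prop :=
  (forall X, is_CLAC X -> is_CLAC (T X))
  /\ (forall X Y (F : RawFun X Y), is_CLAC X -> is_CLAC Y -> is_sfun F ->
        is_sfun (TF X Y F))
  /\ (forall X Y (F G : RawFun X Y), is_CLAC X -> is_CLAC Y ->
        is_sfun F -> is_sfun G -> feq F G -> feq (TF X Y F) (TF X Y G))
  /\ (forall X, is_CLAC X -> feq (TF X X (idF X)) (idF (T X)))
  /\ (forall X Y Z (F : RawFun X Y) (G : RawFun Y Z),
        is_CLAC X -> is_CLAC Y -> is_CLAC Z -> is_sfun F -> is_sfun G ->
        feq (TF X Z (compF F G)) (compF (TF X Y F) (TF Y Z G)))
  /\ (forall X, is_CLAC X -> is_sfun (ep X))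
  /\ (forall X, is_CLAC X -> is_sfun (de X))
  /\ (forall X Y (F : RawFun X Y), is_CLAC X -> is_CLAC Y -> is_sfun F ->
        feq (compF (TF X Y F) (ep Y)) (compF (ep X) F))
  /\ (forall X Y (F : RawFun X Y), is_CLAC X -> is_CLAC Y -> is_sfun F ->
        feq (compF (de X) (TF (T X) (T Y) (TF X Y F))) (compF (TF X Y F) (de Y)))
  /\ (forall X, is_CLAC X -> feq (compF (de X) (ep (T X))) (idF (T X)))
  /\ (forall X, is_CLAC X -> feq (compF (de X) (TF (T X) X (ep X))) (idF (T X)))
  /\ (forall X, is_CLAC X ->
        feq (compF (de X) (de (T X))) (compF (de X) (TF (T X) (T (T X)) (de X)))).

(* A pre-D-sequence f is a D-sequence exactly when every derivative D^n f
   satisfies the four differential axioms at level 0.  These axioms are stable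
   under sums, pairings and precomposition with additive maps, and the
   sequences (h, pi_1 h, pi_1 pi_1 h, ...) of additive maps h satisfy them;
   this covers the identities and projections of D[X].  Stability under
   composition comes from D(f * g) = T(f) * D(g): each axiom of f lets the
   corresponding structure map (<1,0>, 1 x (pi_0 + pi_1), l, c) be moved
   across T(f), after which the axiom of g applies.  Hence D[X] is a Cartesian
   left additive category.  A strict functor F sends every component and every
   structure map of X to the corresponding one of Y up to transport along
   F(P^n A) = P^n(F A), so D[F] is strict.  The comonad laws then hold
   componentwise: (D^n f)_0 = f_n, and both delta(delta f) and D[delta](delta f)
   are the double sequence (D^m (D^n f)). *)

From Stdlib Require Import FunctionalExtensionality Eqdep.

Notation "f ;; g" := (comp f g) (at level 40, left associativity).
Notation "f ⊕ g" := (add f g) (at level 50, left associativity).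

(* Lets [rewrite] match up to unfolding in implicit arguments, e.g. [P A]
   against [prod A A] or [Pn (S n) A] against [Pn n (P A)]. *)
Set Keyed Unification.

Create HintDb ok_maps.
#[export] Hint Resolve ok_id ok_comp ok_add ok_zero ok_p0 ok_p1 ok_pair ok_bang : ok_maps.
#[export] Hint Extern 1 (ok _) => progress cbn [Dc prod P] : ok_maps.
Ltac solve_ok := solve [eauto 40 with ok_maps].

Section Derivatives.
Variable R : RawCLAC.

Definition ok_seq {A B : Ob R} (f : preseq R A B) : Prop := forall n, ok (f n).

Definition pairps {C A B : Ob R} (f : preseq R C A) (g : preseq R C B)
  : preseq R C (prod R A B) := fun n => pair (f n) (g n).

(* The identities and projections of D[X] are [iota] of those of X. *)
Definition iota {A B : Ob R} (h : Hom R A B) : preseq R A B :=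
  fun n => iseq n A ;; h.

Definition diff_axioms {A B : Ob R} (f : preseq R A B) : Prop :=
  lact R (pair (idm A) zero) (Dps R f) = zerops R
  /\ lact R (cross R (idm A) (p0 A A ⊕ p1 A A)) (Dps R f)
     = addps R (lact R (cross R (idm A) (p0 A A)) (Dps R f))
               (lact R (cross R (idm A) (p1 A A)) (Dps R f))
  /\ lact R (ellmap R A) (Dps R (Dps R f)) = Dps R f
  /\ lact R (cmap R A) (Dps R (Dps R f)) = Dps R (Dps R f).

Lemma Dseq_unfold {A B} (f : preseq R A B) :
  Dseq R f <-> diff_axioms f /\ Dseq R (Dps R f).
Proof.
  split.
  - intro H. split; [exact (H 0) | intro n; exact (H (S n))].
  - intros [H0 HS] [|n]; [exact H0 | exact (HS n)].
Qed.

Lemma Dseq_diff_axioms {A B} (f : preseq R A B) : Dseq R f -> forall n, diff_axioms (Dn n f).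
Proof.
  intros H n. revert A f H. induction n as [|n IH]; intros A f H;
    apply Dseq_unfold in H as [H0 HS]; [exact H0 | exact (IH _ _ HS)].
Qed.

Lemma Dseq_of_diff_axioms {A B} (f : preseq R A B) : (forall n, diff_axioms (Dn n f)) -> Dseq R f.
Proof.
  intros H k. revert A f H. induction k as [|k IH]; intros A f H;
    [exact (H 0) | exact (IH _ (Dps R f) (fun n => H (S n)))].
Qed.

Lemma Dn_0 n : forall {A B} (f : preseq R A B), Dn n f 0 = f n.
Proof. induction n as [|n IH]; intros A B f; [reflexivity | exact (IH _ _ (Dps R f))]. Qed.

Lemma Dn_addps n : forall {A B} (f g : preseq R A B),
  Dn n (addps R f g) = addps R (Dn n f) (Dn n g).
Proof.
  induction n as [|n IH]; intros A B f g; [reflexivity | exact (IH _ _ (Dps R f) (Dps R g))].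
Qed.

Lemma Dn_zerops n : forall {A B : Ob R}, Dn n (zerops R (A:=A) (B:=B)) = zerops R.
Proof. induction n as [|n IH]; intros A B; [reflexivity | exact (IH (P A) B)]. Qed.

Lemma Dn_pairps n : forall {C A B} (f : preseq R C A) (g : preseq R C B),
  Dn n (pairps f g) = pairps (Dn n f) (Dn n g).
Proof.
  induction n as [|n IH]; intros C A B f g; [reflexivity | exact (IH _ _ _ (Dps R f) (Dps R g))].
Qed.

Lemma Dn_lact n : forall {A' A B} (h : Hom R A' A) (f : preseq R A B),
  Dn n (lact R h f) = lact R (Pnm n h) (Dn n f).
Proof.
  induction n as [|n IH]; intros A' A B h f; [reflexivity | exact (IH _ _ _ (Pm R h) (Dps R f))].
Qed.

Lemma Dn_compps n : forall {A B C} (f : preseq R A B) (g : preseq R B C),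
  Dn n (compps R f g) = compps R (Tn R n f) (Dn n g).
Proof.
  induction n as [|n IH]; intros A B C f g; [reflexivity | exact (IH _ _ _ (Tps R f) (Dps R g))].
Qed.

End Derivatives.

#[export] Hint Unfold ok_seq : ok_maps.
#[export] Hint Extern 4 (ok (?f ?n)) => refine ((_ : ok_seq _ f) n) : ok_maps.

Section OkClosure.
Variable X : RawCLAC.
Hypothesis HX : is_CLAC X.

Lemma ok_cross {A B A' B'} (f : Hom X A A') (g : Hom X B B') :
  ok f -> ok g -> ok (cross X f g).
Proof. intros. unfold cross. solve_ok. Qed.

Lemma ok_Pnm n : forall {A B} (f : Hom X A B), ok f -> ok (Pnm n f).
Proof.
  induction n as [|n IH]; intros A B f Hf; simpl; [assumption|].
  apply IH, ok_cross; assumption.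
Qed.

Lemma ok_iseq n : forall A : Ob X, ok (iseq n A).
Proof. induction n; intros; simpl; solve_ok. Qed.

End OkClosure.

#[export] Hint Resolve ok_cross ok_Pnm ok_iseq : ok_maps.

Section Cartesian.
Variable X : RawCLAC.
Hypothesis HX : is_CLAC X.

Lemma pair_ext {C A B} (u v : Hom X C (prod X A B)) : ok u -> ok v ->
  u ;; p0 A B = v ;; p0 A B -> u ;; p1 A B = v ;; p1 A B -> u = v.
Proof.
  intros Hu Hv E0 E1.
  rewrite <- (pair_eta _ HX _ _ _ u), <- (pair_eta _ HX _ _ _ v) by assumption.
  congruence.
Qed.

Lemma comp_pair {D C A B} (h : Hom X D C) (f : Hom X C A) (g : Hom X C B) :
  ok h -> ok f -> ok g -> h ;; pair f g = pair (h ;; f) (h ;; g).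
Proof.
  intros. apply pair_ext; try solve_ok.
  - rewrite (comp_assoc _ HX), !(pair_p0 _ HX) by solve_ok. reflexivity.
  - rewrite (comp_assoc _ HX), !(pair_p1 _ HX) by solve_ok. reflexivity.
Qed.

Lemma pair_zero {C A B} : pair (@zero X C A) (@zero X C B) = zero.
Proof.
  rewrite <- (pair_eta _ HX _ _ _ (@zero X C (prod X A B))) by solve_ok.
  rewrite (p0_zero _ HX), (p1_zero _ HX). reflexivity.
Qed.

Lemma pair_add {C A B} (f f' : Hom X C A) (g g' : Hom X C B) :
  ok f -> ok f' -> ok g -> ok g' -> pair (f ⊕ f') (g ⊕ g') = pair f g ⊕ pair f' g'.
Proof.
  intros. apply pair_ext; try solve_ok.
  - rewrite (p0_add _ HX), !(pair_p0 _ HX) by solve_ok. reflexivity.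
  - rewrite (p1_add _ HX), !(pair_p1 _ HX) by solve_ok. reflexivity.
Qed.

Lemma pair_p0_p1 {A B : Ob X} : pair (p0 A B) (p1 A B) = idm (prod X A B).
Proof.
  rewrite <- (comp_id_l _ HX _ _ (p0 A B)), <- (comp_id_l _ HX _ _ (p1 A B)) by solve_ok.
  apply (pair_eta _ HX); solve_ok.
Qed.

Lemma cross_p0 {A B A' B'} (a : Hom X A A') (b : Hom X B B') : ok a -> ok b ->
  cross X a b ;; p0 A' B' = p0 A B ;; a.
Proof. intros. apply (pair_p0 _ HX); solve_ok. Qed.

Lemma cross_p1 {A B A' B'} (a : Hom X A A') (b : Hom X B B') : ok a -> ok b ->
  cross X a b ;; p1 A' B' = p1 A B ;; b.
Proof. intros. apply (pair_p1 _ HX); solve_ok. Qed.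

Lemma pair_cross {C A B A' B'} (f : Hom X C A) (g : Hom X C B) (a : Hom X A A') (b : Hom X B B') :
  ok f -> ok g -> ok a -> ok b -> pair f g ;; cross X a b = pair (f ;; a) (g ;; b).
Proof.
  intros. unfold cross. rewrite comp_pair by solve_ok.
  rewrite <- !(comp_assoc _ HX), (pair_p0 _ HX), (pair_p1 _ HX) by solve_ok. reflexivity.
Qed.

Lemma cross_comp {A B A' B' A'' B''} (a : Hom X A A') (b : Hom X B B')
  (c : Hom X A' A'') (d : Hom X B' B'') : ok a -> ok b -> ok c -> ok d ->
  cross X (a ;; c) (b ;; d) = cross X a b ;; cross X c d.
Proof.
  intros. unfold cross at 2. rewrite pair_cross by solve_ok.
  unfold cross. rewrite !(comp_assoc _ HX) by solve_ok. reflexivity.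
Qed.

Lemma Pm_comp {A B C} (f : Hom X A B) (g : Hom X B C) : ok f -> ok g ->
  Pm X (f ;; g) = Pm X f ;; Pm X g.
Proof. intros. apply cross_comp; assumption. Qed.

Lemma Pm_id (A : Ob X) : Pm X (idm A) = idm (P A).
Proof.
  unfold Pm, cross. rewrite !(comp_id_r _ HX) by solve_ok. apply pair_p0_p1.
Qed.

Lemma Pnm_comp n : forall {A B C} (f : Hom X A B) (g : Hom X B C), ok f -> ok g ->
  Pnm n (f ;; g) = Pnm n f ;; Pnm n g.
Proof.
  induction n as [|n IH]; intros; simpl; [reflexivity|].
  rewrite Pm_comp by solve_ok. apply IH; solve_ok.
Qed.

Lemma Pnm_id n : forall A : Ob X, Pnm n (idm A) = idm (Pn n A).
Proof. induction n as [|n IH]; intros; simpl; [reflexivity | rewrite Pm_id; apply IH]. Qed.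

Lemma iseq_natural n : forall {A B} (h : Hom X A B), ok h ->
  Pnm n h ;; iseq n B = iseq n A ;; h.
Proof.
  induction n as [|n IH]; intros A B h Hh; simpl.
  - rewrite (comp_id_r _ HX), (comp_id_l _ HX) by solve_ok. reflexivity.
  - rewrite <- (comp_assoc _ HX), IH, !(comp_assoc _ HX) by solve_ok.
    unfold Pm. rewrite cross_p1 by solve_ok. reflexivity.
Qed.

Lemma add_0r {A B} (f : Hom X A B) : ok f -> f ⊕ zero = f.
Proof. intros. rewrite (add_comm _ HX) by solve_ok. apply (add_0l _ HX); solve_ok. Qed.

Lemma add_add_swap {A B} (a b c d : Hom X A B) : ok a -> ok b -> ok c -> ok d ->
  (a ⊕ b) ⊕ (c ⊕ d) = (a ⊕ c) ⊕ (b ⊕ d).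
Proof.
  intros. rewrite !(add_assoc _ HX) by solve_ok. f_equal.
  rewrite <- !(add_assoc _ HX) by solve_ok. f_equal. apply (add_comm _ HX); solve_ok.
Qed.

Lemma pair_p0_comp {C A B D} (f : Hom X C A) (g : Hom X C B) (h : Hom X A D) :
  ok f -> ok g -> ok h -> pair f g ;; (p0 A B ;; h) = f ;; h.
Proof. intros. rewrite <- (comp_assoc _ HX), (pair_p0 _ HX) by solve_ok. reflexivity. Qed.

Lemma pair_p1_comp {C A B D} (f : Hom X C A) (g : Hom X C B) (h : Hom X B D) :
  ok f -> ok g -> ok h -> pair f g ;; (p1 A B ;; h) = g ;; h.
Proof. intros. rewrite <- (comp_assoc _ HX), (pair_p1 _ HX) by solve_ok. reflexivity. Qed.

Lemma zero_p0_comp {C A B D} (h : Hom X A D) :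
  ok h -> (@zero X C (prod X A B)) ;; (p0 A B ;; h) = zero ;; h.
Proof. intros. rewrite <- (comp_assoc _ HX), (p0_zero _ HX) by solve_ok. reflexivity. Qed.

Lemma zero_p1_comp {C A B D} (h : Hom X B D) :
  ok h -> (@zero X C (prod X A B)) ;; (p1 A B ;; h) = zero ;; h.
Proof. intros. rewrite <- (comp_assoc _ HX), (p1_zero _ HX) by solve_ok. reflexivity. Qed.

Lemma Pnm_comp_assoc n {A B C D} (a : Hom X A B) (b : Hom X B C) (h : Hom X (Pn n C) D) :
  ok a -> ok b -> ok h -> Pnm n a ;; (Pnm n b ;; h) = Pnm n (a ;; b) ;; h.
Proof. intros. rewrite <- (comp_assoc _ HX), Pnm_comp by solve_ok. reflexivity. Qed.

End Cartesian.

Section Additive.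
Variable X : RawCLAC.
Hypothesis HX : is_CLAC X.

Definition additive {A B : Ob X} (k : Hom X A B) : Prop :=
  ok k
  /\ (forall C (f g : Hom X C A), ok f -> ok g -> (f ⊕ g) ;; k = f ;; k ⊕ g ;; k)
  /\ (forall C, (@zero X C A) ;; k = zero).

Lemma additive_ok {A B} (k : Hom X A B) : additive k -> ok k.
Proof. intros [H _]. exact H. Qed.

Lemma additive_add {A B C} (k : Hom X A B) (f g : Hom X C A) : additive k ->
  ok f -> ok g -> (f ⊕ g) ;; k = f ;; k ⊕ g ;; k.
Proof. intros [_ [H _]]. apply H. Qed.

Lemma additive_zero {A B C} (k : Hom X A B) : additive k -> (@zero X C A) ;; k = zero.
Proof. intros [_ [_ H]]. apply H. Qed.

Lemma additive_p0 (A B : Ob X) : additive (p0 A B).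
Proof.
  split; [solve_ok | split]; intros.
  - apply (p0_add _ HX); assumption.
  - apply (p0_zero _ HX).
Qed.

Lemma additive_p1 (A B : Ob X) : additive (p1 A B).
Proof.
  split; [solve_ok | split]; intros.
  - apply (p1_add _ HX); assumption.
  - apply (p1_zero _ HX).
Qed.

Lemma additive_id (A : Ob X) : additive (idm A).
Proof.
  split; [solve_ok | split]; intros; rewrite !(comp_id_r _ HX) by solve_ok; reflexivity.
Qed.

Lemma additive_comp {A B C} (h : Hom X A B) (k : Hom X B C) :
  additive h -> additive k -> additive (h ;; k).
Proof.
  intros Hh Hk. pose proof (additive_ok h Hh). pose proof (additive_ok k Hk).
  split; [solve_ok | split]; intros.
  - rewrite <- !(comp_assoc _ HX), (additive_add h), (additive_add k) by solve_ok. reflexivity.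
  - rewrite <- (comp_assoc _ HX), (additive_zero h), (additive_zero k) by solve_ok. reflexivity.
Qed.

Lemma additive_pair {C A B} (f : Hom X C A) (g : Hom X C B) :
  additive f -> additive g -> additive (pair f g).
Proof.
  intros Hf Hg. pose proof (additive_ok f Hf). pose proof (additive_ok g Hg).
  split; [solve_ok | split]; intros.
  - rewrite !comp_pair, (additive_add f), (additive_add g) by solve_ok. apply pair_add; solve_ok.
  - rewrite comp_pair, (additive_zero f), (additive_zero g) by solve_ok.
    apply pair_zero; assumption.
Qed.

Lemma additive_cross {A B A' B'} (a : Hom X A A') (b : Hom X B B') :
  additive a -> additive b -> additive (cross X a b).
Proof.
  intros. unfold cross.
  apply additive_pair; apply additive_comp; auto using additive_p0, additive_p1.
Qed.

Lemma additive_Pnm n : forall {A B} (h : Hom X A B), additive h -> additive (Pnm n h).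
Proof.
  induction n as [|n IH]; intros A B h Hh; simpl; [assumption|].
  apply IH, additive_cross; assumption.
Qed.

End Additive.

#[export] Hint Resolve additive_ok : ok_maps.

Section OkSeq.
Variable X : RawCLAC.
Hypothesis HX : is_CLAC X.

Lemma ok_seq_Dps {A B} (f : preseq X A B) : ok_seq X f -> ok_seq X (Dps X f).
Proof. intros Hf n. exact (Hf (S n)). Qed.

Lemma ok_seq_Dn n : forall {A B} (f : preseq X A B), ok_seq X f -> ok_seq X (Dn n f).
Proof. induction n; intros; simpl; auto using ok_seq_Dps. Qed.

Lemma ok_seq_lact {A' A B} (h : Hom X A' A) (g : preseq X A B) :
  ok h -> ok_seq X g -> ok_seq X (lact X h g).
Proof. intros ? ? n. unfold lact. solve_ok. Qed.

Lemma ok_seq_Tps {A B} (f : preseq X A B) : ok_seq X f -> ok_seq X (Tps X f).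
Proof. intros ? n. unfold Tps. solve_ok. Qed.

Lemma ok_seq_Tn n : forall {A B} (f : preseq X A B), ok_seq X f -> ok_seq X (Tn X n f).
Proof. induction n; intros; simpl; auto using ok_seq_Tps. Qed.

End OkSeq.

#[export] Hint Resolve ok_seq_Dps ok_seq_Dn ok_seq_lact ok_seq_Tps ok_seq_Tn : ok_maps.

Section Sequences.
Variable X : RawCLAC.
Hypothesis HX : is_CLAC X.

Lemma lact_comp {A'' A' A B} (h : Hom X A'' A') (k : Hom X A' A) (g : preseq X A B) :
  ok h -> ok k -> ok_seq X g -> lact X (h ;; k) g = lact X h (lact X k g).
Proof.
  intros. extensionality n. unfold lact.
  rewrite Pnm_comp, (comp_assoc _ HX) by solve_ok. reflexivity.
Qed.

Lemma lact_id {A B} (g : preseq X A B) : ok_seq X g -> lact X (idm A) g = g.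
Proof.
  intros. extensionality n. unfold lact. rewrite Pnm_id, (comp_id_l _ HX) by solve_ok. reflexivity.
Qed.

Lemma lact_addps {A' A B} (h : Hom X A' A) (f g : preseq X A B) :
  ok h -> ok_seq X f -> ok_seq X g ->
  lact X h (addps X f g) = addps X (lact X h f) (lact X h g).
Proof. intros. extensionality n. apply (comp_addr _ HX); solve_ok. Qed.

Lemma lact_zerops {A' A B} (h : Hom X A' A) : ok h -> lact X h (zerops X (B:=B)) = zerops X.
Proof. intros. extensionality n. apply (comp_0r _ HX); solve_ok. Qed.

Lemma lact_pairps {A' C A B} (h : Hom X A' C) (f : preseq X C A) (g : preseq X C B) :
  ok h -> ok_seq X f -> ok_seq X g ->
  lact X h (pairps X f g) = pairps X (lact X h f) (lact X h g).
Proof. intros. extensionality n. apply comp_pair; solve_ok. Qed.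

Lemma lact_iota {A' A B} (k : Hom X A' A) (h : Hom X A B) : ok k -> ok h ->
  lact X k (iota X h) = iota X (k ;; h).
Proof.
  intros. extensionality n. unfold lact, iota.
  rewrite <- (comp_assoc _ HX), iseq_natural, (comp_assoc _ HX) by solve_ok. reflexivity.
Qed.

Lemma ract_iota {A B C} (h : Hom X A B) (k : Hom X B C) : ok h -> ok k ->
  ract X (iota X h) k = iota X (h ;; k).
Proof. intros. extensionality n. apply (comp_assoc _ HX); solve_ok. Qed.

Lemma Dps_iota {A B} (h : Hom X A B) : ok h -> Dps X (iota X h) = iota X (p1 A A ;; h).
Proof. intros. extensionality n. apply (comp_assoc _ HX); solve_ok. Qed.

Lemma Tps_lact {A' A B} (h : Hom X A' A) (f : preseq X A B) : ok h -> ok_seq X f ->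
  Tps X (lact X h f) = lact X (Pm X h) (Tps X f).
Proof.
  intros. extensionality n. unfold Tps, lact, Pm. rewrite comp_pair by solve_ok. f_equal.
  rewrite <- !(comp_assoc _ HX), <- !Pnm_comp, cross_p0 by solve_ok. reflexivity.
Qed.

Lemma Tn_lact n : forall {A' A B} (h : Hom X A' A) (f : preseq X A B), ok h -> ok_seq X f ->
  Tn X n (lact X h f) = lact X (Pnm n h) (Tn X n f).
Proof.
  induction n as [|n IH]; intros; simpl; [reflexivity|].
  rewrite Tps_lact by solve_ok. apply IH; solve_ok.
Qed.

Lemma Tps_ract {A B C} (f : preseq X A B) (k : Hom X B C) : ok_seq X f -> ok k ->
  Tps X (ract X f k) = ract X (Tps X f) (Pm X k).
Proof.
  intros. extensionality n. unfold Tps, ract, Pm. rewrite pair_cross by solve_ok.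
  rewrite (comp_assoc _ HX) by solve_ok. reflexivity.
Qed.

Lemma Tn_ract n : forall {A B C} (f : preseq X A B) (k : Hom X B C), ok_seq X f -> ok k ->
  Tn X n (ract X f k) = ract X (Tn X n f) (Pnm n k).
Proof.
  induction n as [|n IH]; intros; simpl; [reflexivity|].
  rewrite Tps_ract by solve_ok. apply IH; solve_ok.
Qed.

Lemma Tps_iota {A B} (h : Hom X A B) : ok h -> Tps X (iota X h) = iota X (Pm X h).
Proof.
  intros. extensionality n. unfold Tps, iota. simpl. unfold Pm.
  apply pair_ext; try solve_ok.
  - rewrite (pair_p0 _ HX), <- (comp_assoc _ HX), iseq_natural by solve_ok.
    rewrite !(comp_assoc _ HX), cross_p0 by solve_ok. reflexivity.
  - rewrite (pair_p1 _ HX), !(comp_assoc _ HX), cross_p1 by solve_ok. reflexivity.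
Qed.

Lemma Tn_iota n : forall {A B} (h : Hom X A B), ok h -> Tn X n (iota X h) = iota X (Pnm n h).
Proof.
  induction n as [|n IH]; intros; simpl; [reflexivity|].
  rewrite Tps_iota by solve_ok. apply IH; solve_ok.
Qed.

Lemma Tn_0_iseq n : forall {A B} (f : preseq X A B), ok_seq X f -> Tn X n f 0 ;; iseq n B = f n.
Proof.
  induction n as [|n IH]; intros A B f Hf; simpl.
  - apply (comp_id_r _ HX); solve_ok.
  - rewrite <- (comp_assoc _ HX), IH by solve_ok. apply (pair_p1 _ HX); solve_ok.
Qed.

Lemma compps_lact {A' A B C} (h : Hom X A' A) (f : preseq X A B) (g : preseq X B C) :
  ok h -> ok_seq X f -> ok_seq X g -> compps X (lact X h f) g = lact X h (compps X f g).
Proof.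
  intros. extensionality n. unfold compps. rewrite Tn_lact by solve_ok.
  apply (comp_assoc _ HX); solve_ok.
Qed.

Lemma compps_ract {A B C D} (f : preseq X A B) (k : Hom X B C) (g : preseq X C D) :
  ok_seq X f -> ok k -> ok_seq X g -> compps X (ract X f k) g = compps X f (lact X k g).
Proof.
  intros. extensionality n. unfold compps, lact. rewrite Tn_ract by solve_ok.
  apply (comp_assoc _ HX); solve_ok.
Qed.

Lemma compps_addr {A B C} (f : preseq X A B) (g h : preseq X B C) :
  ok_seq X f -> ok_seq X g -> ok_seq X h ->
  compps X f (addps X g h) = addps X (compps X f g) (compps X f h).
Proof. intros. extensionality n. apply (comp_addr _ HX); solve_ok. Qed.

Lemma compps_zeror {A B C} (f : preseq X A B) :
  ok_seq X f -> compps X f (zerops X (B:=C)) = zerops X.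
Proof. intros. extensionality n. apply (comp_0r _ HX); solve_ok. Qed.

Lemma compps_iota {A B C} (f : preseq X A B) (h : Hom X B C) : ok_seq X f -> ok h ->
  compps X f (iota X h) = ract X f h.
Proof.
  intros. extensionality n. unfold compps, iota, ract.
  rewrite <- (comp_assoc _ HX), Tn_0_iseq by solve_ok. reflexivity.
Qed.

Lemma iota_compps {A B C} (h : Hom X A B) (g : preseq X B C) : ok h -> ok_seq X g ->
  compps X (iota X h) g = lact X h g.
Proof.
  intros. extensionality n. unfold compps, lact. rewrite Tn_iota by solve_ok.
  unfold iota. simpl. rewrite (comp_id_l _ HX) by solve_ok. reflexivity.
Qed.

Lemma Tps_compps {A B C} (f : preseq X A B) (g : preseq X B C) : ok_seq X f -> ok_seq X g ->
  Tps X (compps X f g) = compps X (Tps X f) (Tps X g).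
Proof.
  intros Hf Hg.
  assert (Hp0 : lact X (p0 A A) f = ract X (Tps X f) (p0 B B)).
  { extensionality m. symmetry. apply (pair_p0 _ HX); solve_ok. }
  extensionality n. unfold Tps at 1 3, compps. simpl.
  rewrite comp_pair by solve_ok. f_equal.
  rewrite <- !(comp_assoc _ HX) by solve_ok. f_equal.
  change (Pnm n (p0 A A) ;; Tn X n f 0 = ract X (Tn X n (Tps X f)) (Pnm n (p0 B B)) 0).
  rewrite <- Tn_ract, <- Hp0, Tn_lact by solve_ok. reflexivity.
Qed.

Lemma Tn_compps n : forall {A B C} (f : preseq X A B) (g : preseq X B C),
  ok_seq X f -> ok_seq X g ->
  Tn X n (compps X f g) = compps X (Tn X n f) (Tn X n g).
Proof.
  induction n as [|n IH]; intros; simpl; [reflexivity|].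
  rewrite Tps_compps by solve_ok. apply IH; solve_ok.
Qed.

Lemma compps_assoc {A B C D} (f : preseq X A B) (g : preseq X B C) (h : preseq X C D) :
  ok_seq X f -> ok_seq X g -> ok_seq X h -> compps X (compps X f g) h = compps X f (compps X g h).
Proof.
  intros. extensionality n. unfold compps at 1 2 3. rewrite Tn_compps by solve_ok.
  apply (comp_assoc _ HX); solve_ok.
Qed.

End Sequences.

Section DiffAxioms.
Variable X : RawCLAC.
Hypothesis HX : is_CLAC X.

Ltac cart_simpl :=
  repeat first
    [ rewrite (comp_assoc _ HX) by solve_ok
    | rewrite (pair_p0 _ HX) by solve_ok | rewrite (pair_p1 _ HX) by solve_ok
    | rewrite pair_p0_comp by solve_ok | rewrite pair_p1_comp by solve_ok
    | rewrite (p0_zero _ HX) | rewrite (p1_zero _ HX)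
    | rewrite zero_p0_comp by solve_ok | rewrite zero_p1_comp by solve_ok
    | rewrite (comp_id_l _ HX) by solve_ok | rewrite (comp_id_r _ HX) by solve_ok
    | rewrite (comp_0r _ HX) by solve_ok | rewrite comp_pair by solve_ok
    | rewrite (comp_addr _ HX) by solve_ok
    | rewrite <- Pnm_comp by solve_ok | rewrite Pnm_comp_assoc by solve_ok
    | rewrite Pnm_id by solve_ok
    | rewrite (add_0l _ HX) by solve_ok | rewrite add_0r by solve_ok
    | rewrite (pair_eta _ HX) by solve_ok | rewrite pair_p0_p1 by solve_ok ].

Ltac cart_eq :=
  cart_simpl; repeat (apply pair_ext; try solve_ok; cart_simpl); try reflexivity.

Lemma diff_axioms_zerops {A B : Ob X} : diff_axioms X (zerops X (A:=A) (B:=B)).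
Proof.
  unfold diff_axioms. change (Dps X (zerops X)) with (zerops X (A:=P A) (B:=B)).
  change (Dps X (zerops X)) with (zerops X (A:=P (P A)) (B:=B)).
  rewrite !lact_zerops by solve_ok. repeat split.
  extensionality n. symmetry. apply (add_0l _ HX); solve_ok.
Qed.

Lemma diff_axioms_addps {A B} (f g : preseq X A B) : ok_seq X f -> ok_seq X g ->
  diff_axioms X f -> diff_axioms X g -> diff_axioms X (addps X f g).
Proof.
  intros Hf Hg [f1 [f2 [f3 f4]]] [g1 [g2 [g3 g4]]].
  unfold diff_axioms. change (Dps X (addps X f g)) with (addps X (Dps X f) (Dps X g)).
  change (Dps X (addps X (Dps X f) (Dps X g))) with (addps X (Dps X (Dps X f)) (Dps X (Dps X g))).
  rewrite !lact_addps, f1, f2, f3, f4, g1, g2, g3, g4 by solve_ok. repeat split.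
  - extensionality n. apply (add_0l _ HX); solve_ok.
  - extensionality n. apply add_add_swap; solve_ok.
Qed.

Lemma diff_axioms_pairps {C A B} (f : preseq X C A) (g : preseq X C B) : ok_seq X f -> ok_seq X g ->
  diff_axioms X f -> diff_axioms X g -> diff_axioms X (pairps X f g).
Proof.
  intros Hf Hg [f1 [f2 [f3 f4]]] [g1 [g2 [g3 g4]]].
  unfold diff_axioms. change (Dps X (pairps X f g)) with (pairps X (Dps X f) (Dps X g)).
  change (Dps X (pairps X (Dps X f) (Dps X g))) with (pairps X (Dps X (Dps X f)) (Dps X (Dps X g))).
  rewrite !lact_pairps, f1, f2, f3, f4, g1, g2, g3, g4 by solve_ok. repeat split.
  - extensionality n. apply pair_zero; assumption.
  - extensionality n. apply pair_add; solve_ok.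
Qed.

Lemma diff_axioms_lact {A' A B} (k : Hom X A' A) (f : preseq X A B) : additive X k -> ok_seq X f ->
  diff_axioms X f -> diff_axioms X (lact X k f).
Proof.
  intros Hk Hf [f1 [f2 [f3 f4]]]. pose proof (additive_ok X k Hk).
  unfold diff_axioms. change (Dps X (lact X k f)) with (lact X (Pm X k) (Dps X f)).
  change (Dps X (lact X (Pm X k) (Dps X f))) with (lact X (Pm X (Pm X k)) (Dps X (Dps X f))).
  rewrite <- !lact_comp by solve_ok. repeat split.
  - replace (pair (idm A') zero ;; Pm X k) with (k ;; pair (idm A) (@zero X A A)).
    + rewrite lact_comp, f1, lact_zerops by solve_ok. reflexivity.
    + unfold Pm, cross. cart_eq. rewrite (additive_zero X k) by assumption. reflexivity.
  - replace (cross X (idm A') (p0 A' A' ⊕ p1 A' A') ;; Pm X k)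
      with (cross X k (Pm X k) ;; cross X (idm A) (p0 A A ⊕ p1 A A)).
    replace (cross X (idm A') (p0 A' A') ;; Pm X k)
      with (cross X k (Pm X k) ;; cross X (idm A) (p0 A A)).
    replace (cross X (idm A') (p1 A' A') ;; Pm X k)
      with (cross X k (Pm X k) ;; cross X (idm A) (p1 A A)).
    + rewrite !lact_comp, f2, lact_addps by solve_ok. reflexivity.
    + unfold Pm, cross. cart_eq.
    + unfold Pm, cross. cart_eq.
    + unfold Pm, cross. cart_eq. rewrite (additive_add X k) by solve_ok. cart_eq.
  - replace (ellmap X A' ;; Pm X (Pm X k)) with (Pm X k ;; ellmap X A).
    + rewrite lact_comp, f3 by solve_ok. reflexivity.
    + unfold ellmap, Pm, cross. cart_eq. all: rewrite (additive_zero X k Hk); cart_eq.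
  - replace (cmap X A' ;; Pm X (Pm X k)) with (Pm X (Pm X k) ;; cmap X A).
    + rewrite lact_comp, f4 by solve_ok. reflexivity.
    + unfold cmap, Pm, cross. cart_eq.
Qed.

Lemma diff_axioms_iota {A B} (h : Hom X A B) : additive X h -> diff_axioms X (iota X h).
Proof.
  intros Hh. pose proof (additive_ok X h Hh).
  unfold diff_axioms. rewrite !Dps_iota, !lact_iota by solve_ok. repeat split; f_equal.
  - extensionality n. unfold iota, zerops. cart_eq.
    rewrite (additive_zero X h Hh). apply (comp_0r _ HX); solve_ok.
  - extensionality n. unfold iota, addps. rewrite <- (comp_addr _ HX) by solve_ok. f_equal. cart_eq.
    rewrite (additive_add X h) by solve_ok. cart_eq.
  - unfold ellmap, cross. cart_eq.
  - unfold cmap. cart_eq.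
Qed.

Lemma Tps_zero_section {A B} (f : preseq X A B) : ok_seq X f ->
  lact X (pair (idm A) zero) (Dps X f) = zerops X ->
  lact X (pair (idm A) (@zero X A A)) (Tps X f) = ract X f (pair (idm B) (@zero X B B)).
Proof.
  intros Hf H1. extensionality n.
  assert (H : Pnm n (pair (idm A) (@zero X A A)) ;; f (S n) = zero)
    by exact (f_equal (fun u => u n) H1).
  unfold lact, ract, Tps. rewrite (comp_pair X HX (Pnm n _)), H by solve_ok. cart_eq.
Qed.

(* [tangent2 f] acts as (a, (u, v)) |-> (f a, (D f (a, u), D f (a, v))). *)
Definition tangent2 {A B} (f : preseq X A B) : preseq X (prod X A (P A)) (prod X B (P B)) :=
  fun n => pair (Pnm n (p0 A (P A)) ;; f n)
                (pair (Pnm n (cross X (idm A) (p0 A A)) ;; f (S n))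
                      (Pnm n (cross X (idm A) (p1 A A)) ;; f (S n))).

Lemma ok_seq_tangent2 {A B} (f : preseq X A B) : ok_seq X f -> ok_seq X (tangent2 f).
Proof. intros Hf n. unfold tangent2. solve_ok. Qed.

Lemma Tps_fibre_add {A B} (f : preseq X A B) : ok_seq X f ->
  lact X (cross X (idm A) (p0 A A ⊕ p1 A A)) (Dps X f)
     = addps X (lact X (cross X (idm A) (p0 A A)) (Dps X f))
               (lact X (cross X (idm A) (p1 A A)) (Dps X f)) ->
  lact X (cross X (idm A) (p0 A A ⊕ p1 A A)) (Tps X f)
     = ract X (tangent2 f) (cross X (idm B) (p0 B B ⊕ p1 B B)).
Proof.
  intros Hf H2. extensionality n.
  assert (H : Pnm n (cross X (idm A) (p0 A A ⊕ p1 A A)) ;; f (S n)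
              = Pnm n (cross X (idm A) (p0 A A)) ;; f (S n)
                ⊕ Pnm n (cross X (idm A) (p1 A A)) ;; f (S n))
    by exact (f_equal (fun u => u n) H2).
  unfold lact, ract, tangent2, Tps. rewrite (comp_pair X HX (Pnm n _)), H by solve_ok.
  unfold cross. cart_eq.
Qed.

Lemma Tps_fibre_p0 {A B} (f : preseq X A B) : ok_seq X f ->
  lact X (cross X (idm A) (p0 A A)) (Tps X f) = ract X (tangent2 f) (cross X (idm B) (p0 B B)).
Proof.
  intros Hf. extensionality n. unfold lact, ract, tangent2, Tps.
  rewrite comp_pair by solve_ok. unfold cross. cart_eq.
Qed.

Lemma Tps_fibre_p1 {A B} (f : preseq X A B) : ok_seq X f ->
  lact X (cross X (idm A) (p1 A A)) (Tps X f) = ract X (tangent2 f) (cross X (idm B) (p1 B B)).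
Proof.
  intros Hf. extensionality n. unfold lact, ract, tangent2, Tps.
  rewrite comp_pair by solve_ok. unfold cross. cart_eq.
Qed.

Lemma Tps_Tps_lift {A B} (f : preseq X A B) : ok_seq X f ->
  lact X (pair (idm A) zero) (Dps X f) = zerops X ->
  lact X (ellmap X A) (Dps X (Dps X f)) = Dps X f ->
  lact X (ellmap X A) (Tps X (Tps X f)) = ract X (Tps X f) (ellmap X B).
Proof.
  intros Hf H1 H3. extensionality n.
  assert (H1n : Pnm n (pair (idm A) (@zero X A A)) ;; f (S n) = zero)
    by exact (f_equal (fun u => u n) H1).
  assert (H3n : Pnm n (ellmap X A) ;; f (S (S n)) = f (S n))
    by exact (f_equal (fun u => u n) H3).
  assert (E1 : ellmap X A ;; p0 (P A) (P A) = p0 A A ;; pair (idm A) (@zero X A A))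
    by (unfold ellmap, cross; cart_eq).
  assert (E2 : ellmap X A ;; Pm X (p0 A A) = p0 A A ;; pair (idm A) (@zero X A A))
    by (unfold ellmap, Pm, cross; cart_eq).
  unfold lact, ract.
  change (Tps X (Tps X f) n) with
    (pair (Pnm n (p0 (P A) (P A)) ;; Tps X f n)
          (pair (Pnm n (Pm X (p0 A A)) ;; f (S n)) (f (S (S n))))).
  rewrite !comp_pair, <- !(comp_assoc _ HX), <- !Pnm_comp, E1, E2, !Pnm_comp by solve_ok.
  rewrite !(comp_assoc _ HX), H1n, H3n by solve_ok.
  unfold Tps, ellmap, cross. cart_eq.
Qed.

Lemma Tps_Tps_swap {A B} (f : preseq X A B) : ok_seq X f ->
  lact X (cmap X A) (Dps X (Dps X f)) = Dps X (Dps X f) ->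
  lact X (cmap X A) (Tps X (Tps X f)) = ract X (Tps X (Tps X f)) (cmap X B).
Proof.
  intros Hf H4. extensionality n.
  assert (H : Pnm n (cmap X A) ;; f (S (S n)) = f (S (S n)))
    by exact (f_equal (fun u => u n) H4).
  unfold lact, ract.
  change (Tps X (Tps X f) n) with
    (pair (Pnm n (p0 (P A) (P A)) ;; pair (Pnm n (p0 A A) ;; f n) (f (S n)))
          (pair (Pnm n (Pm X (p0 A A)) ;; f (S n)) (f (S (S n))))).
  cart_simpl. rewrite H. unfold cmap, Pm, cross. cart_eq.
Qed.

Lemma diff_axioms_compps {A B C} (f : preseq X A B) (g : preseq X B C) : ok_seq X f -> ok_seq X g ->
  diff_axioms X f -> diff_axioms X g -> diff_axioms X (compps X f g).
Proof.
  intros Hf Hg [f1 [f2 [f3 f4]]] [g1 [g2 [g3 g4]]].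
  assert (ok_seq X (tangent2 f)) by (apply ok_seq_tangent2; assumption).
  unfold diff_axioms. change (Dps X (compps X f g)) with (compps X (Tps X f) (Dps X g)).
  change (Dps X (compps X (Tps X f) (Dps X g))) with (compps X (Tps X (Tps X f)) (Dps X (Dps X g))).
  repeat split.
  - rewrite <- compps_lact, Tps_zero_section, compps_ract, g1 by solve_ok.
    apply compps_zeror; solve_ok.
  - rewrite <- !compps_lact, Tps_fibre_add, Tps_fibre_p0, Tps_fibre_p1, !compps_ract, g2
      by solve_ok.
    apply compps_addr; solve_ok.
  - rewrite <- compps_lact, Tps_Tps_lift, compps_ract, g3 by solve_ok. reflexivity.
  - rewrite <- compps_lact, Tps_Tps_swap, compps_ract, g4 by solve_ok. reflexivity.
Qed.

End DiffAxioms.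

Section DSequences.
Variable X : RawCLAC.
Hypothesis HX : is_CLAC X.

Lemma Dseq_Dps {A B} (f : preseq X A B) : Dseq X f -> Dseq X (Dps X f).
Proof. intros Hf. apply Dseq_unfold in Hf. apply Hf. Qed.

Lemma Dseq_Dn n : forall {A B} (f : preseq X A B), Dseq X f -> Dseq X (Dn n f).
Proof. induction n; intros; simpl; auto using Dseq_Dps. Qed.

Lemma Dseq_zerops {A B : Ob X} : Dseq X (zerops X (A:=A) (B:=B)).
Proof.
  apply Dseq_of_diff_axioms. intro n. rewrite Dn_zerops. apply diff_axioms_zerops; assumption.
Qed.

Lemma Dseq_addps {A B} (f g : preseq X A B) : ok_seq X f -> ok_seq X g ->
  Dseq X f -> Dseq X g -> Dseq X (addps X f g).
Proof.
  intros Hf Hg Df Dg. apply Dseq_of_diff_axioms. intro n. rewrite Dn_addps.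
  apply diff_axioms_addps; auto using Dseq_diff_axioms with ok_maps.
Qed.

Lemma Dseq_pairps {C A B} (f : preseq X C A) (g : preseq X C B) : ok_seq X f -> ok_seq X g ->
  Dseq X f -> Dseq X g -> Dseq X (pairps X f g).
Proof.
  intros Hf Hg Df Dg. apply Dseq_of_diff_axioms. intro n. rewrite Dn_pairps.
  apply diff_axioms_pairps; auto using Dseq_diff_axioms with ok_maps.
Qed.

Lemma Dseq_lact {A' A B} (k : Hom X A' A) (f : preseq X A B) : additive X k -> ok_seq X f ->
  Dseq X f -> Dseq X (lact X k f).
Proof.
  intros Hk Hf Df. apply Dseq_of_diff_axioms. intro n. rewrite Dn_lact.
  apply diff_axioms_lact; auto using additive_Pnm, Dseq_diff_axioms with ok_maps.
Qed.

Lemma Dseq_iota {A B} (h : Hom X A B) : additive X h -> Dseq X (iota X h).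
Proof.
  intro Hh. apply Dseq_of_diff_axioms. intro n. revert A B h Hh.
  induction n as [|n IH]; intros A B h Hh.
  - apply diff_axioms_iota; assumption.
  - simpl. rewrite Dps_iota by solve_ok.
    apply IH, additive_comp; auto using additive_p1.
Qed.

Lemma Dseq_Tps {A B} (f : preseq X A B) : ok_seq X f -> Dseq X f -> Dseq X (Tps X f).
Proof.
  intros Hf Df. change (Tps X f) with (pairps X (lact X (p0 A A) f) (Dps X f)).
  apply Dseq_pairps; auto using Dseq_lact, Dseq_Dps, additive_p0 with ok_maps.
Qed.

Lemma Dseq_Tn n : forall {A B} (f : preseq X A B), ok_seq X f -> Dseq X f -> Dseq X (Tn X n f).
Proof. induction n; intros; simpl; auto using Dseq_Tps with ok_maps. Qed.

Lemma Dseq_compps {A B C} (f : preseq X A B) (g : preseq X B C) : ok_seq X f -> ok_seq X g ->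
  Dseq X f -> Dseq X g -> Dseq X (compps X f g).
Proof.
  intros Hf Hg Df Dg. apply Dseq_of_diff_axioms. intro n. rewrite Dn_compps.
  apply diff_axioms_compps; try solve_ok.
  - exact (Dseq_diff_axioms _ _ (Dseq_Tn n f Hf Df) 0).
  - apply Dseq_diff_axioms, Dg.
Qed.

Lemma Dseq_terminal {A} (f : preseq X A (term X)) : ok_seq X f -> Dseq X f.
Proof.
  assert (Hterm : forall C (u v : preseq X C (term X)), ok_seq X u -> ok_seq X v -> u = v).
  { intros C u v Hu Hv. extensionality n.
    rewrite (bang_uniq _ HX _ (u n)), (bang_uniq _ HX _ (v n)) by solve_ok. reflexivity. }
  intros Hf. apply Dseq_of_diff_axioms. intro n. repeat split; apply Hterm; solve_ok.
Qed.

End DSequences.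

Section DCategory.
Variable X : RawCLAC.
Hypothesis HX : is_CLAC X.

Lemma iseq_iota (A : Ob X) : (fun n => iseq n A) = iota X (idm A).
Proof. extensionality n. symmetry. apply (comp_id_r _ HX); solve_ok. Qed.

Lemma okD_iota {A B} (h : Hom X A B) : additive X h -> okD X (iota X h).
Proof. split; [solve_ok | apply Dseq_iota; assumption]. Qed.

Lemma Dc_CLAC : is_CLAC (Dc X).
Proof.
  constructor; simpl; intros;
    repeat match goal with H : okD X _ |- _ => destruct H end.
  - rewrite iseq_iota. apply okD_iota, additive_id; assumption.
  - split; [solve_ok | apply Dseq_compps; assumption].
  - split; [solve_ok | apply Dseq_addps; assumption].
  - split; [solve_ok | apply Dseq_zerops; assumption].
  - apply okD_iota, additive_p0; assumption.
  - apply okD_iota, additive_p1; assumption.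
  - split; [solve_ok | apply (Dseq_pairps X HX f g); assumption].
  - split; [solve_ok | apply Dseq_terminal; solve_ok].
  - rewrite iseq_iota, iota_compps by solve_ok. apply lact_id; assumption.
  - rewrite iseq_iota, compps_iota by solve_ok.
    extensionality n. apply (comp_id_r _ HX); solve_ok.
  - apply compps_assoc; assumption.
  - extensionality n. apply (add_assoc _ HX); solve_ok.
  - extensionality n. apply (add_comm _ HX); solve_ok.
  - extensionality n. apply (add_0l _ HX); solve_ok.
  - apply compps_addr; assumption.
  - apply compps_zeror; assumption.
  - rewrite compps_iota by solve_ok. extensionality n. apply (pair_p0 _ HX); solve_ok.
  - rewrite compps_iota by solve_ok. extensionality n. apply (pair_p1 _ HX); solve_ok.
  - rewrite !compps_iota by solve_ok. extensionality n. apply (pair_eta _ HX); solve_ok.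
  - extensionality n. apply (bang_uniq _ HX); solve_ok.
  - rewrite !compps_iota by solve_ok. extensionality n. apply (p0_add _ HX); solve_ok.
  - rewrite compps_iota by solve_ok. extensionality n. apply (p0_zero _ HX).
  - rewrite !compps_iota by solve_ok. extensionality n. apply (p1_add _ HX); solve_ok.
  - rewrite compps_iota by solve_ok. extensionality n. apply (p1_zero _ HX).
Qed.

End DCategory.

Section Comultiplication.
Variable X : RawCLAC.
Hypothesis HX : is_CLAC X.

Definition derivs {A B} (f : preseq X A B) : preseq (Dc X) A B := fun n => Dn n f.

Lemma Dn_derivs n : forall {A B} (f : preseq X A B), Dn (R:=Dc X) n (derivs f) = derivs (Dn n f).
Proof. induction n as [|n IH]; intros A B f; [reflexivity | exact (IH _ _ (Dps X f))]. Qed.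

Lemma Dn_iota n : forall {A B} (h : Hom X A B), ok h -> Dn n (iota X h) = iota X (iseq n A ;; h).
Proof.
  induction n as [|n IH]; intros A B h Hh; simpl.
  - extensionality k. unfold iota. rewrite (comp_id_l _ HX) by solve_ok. reflexivity.
  - rewrite Dps_iota, IH, (comp_assoc _ HX) by solve_ok. reflexivity.
Qed.

Lemma Dc_comp_iota {A B C} (a : Hom X A B) (b : Hom X B C) : ok a -> ok b ->
  @comp (Dc X) _ _ _ (iota X a) (iota X b) = iota X (a ;; b).
Proof.
  intros. change (compps X (iota X a) (iota X b) = iota X (a ;; b)).
  rewrite compps_iota, ract_iota by solve_ok. reflexivity.
Qed.

Lemma Dc_pair_iota {C A B} (a : Hom X C A) (b : Hom X C B) : ok a -> ok b ->
  @pair (Dc X) _ _ _ (iota X a) (iota X b) = iota X (pair a b).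
Proof.
  intros. extensionality n. change (pair (iota X a n) (iota X b n) = iota X (pair a b) n).
  symmetry. apply comp_pair; solve_ok.
Qed.

Lemma Dc_add_iota {A B} (a b : Hom X A B) : ok a -> ok b ->
  @add (Dc X) _ _ (iota X a) (iota X b) = iota X (a ⊕ b).
Proof.
  intros. extensionality n. change (iota X a n ⊕ iota X b n = iota X (a ⊕ b) n).
  symmetry. apply (comp_addr _ HX); solve_ok.
Qed.

Lemma Dc_zero_iota {A B : Ob X} : @zero (Dc X) A B = iota X zero.
Proof.
  extensionality n. change (zero = iota X (@zero X A B) n).
  symmetry. apply (comp_0r _ HX); solve_ok.
Qed.

Lemma Dc_id_iota (A : Ob X) : @idm (Dc X) A = iota X (idm A).
Proof. apply iseq_iota; assumption. Qed.

Lemma Dc_p0_iota (A B : Ob X) : @p0 (Dc X) A B = iota X (p0 A B).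
Proof. reflexivity. Qed.

Lemma Dc_p1_iota (A B : Ob X) : @p1 (Dc X) A B = iota X (p1 A B).
Proof. reflexivity. Qed.

Lemma Dc_cross_iota {A B A' B'} (a : Hom X A A') (b : Hom X B B') : ok a -> ok b ->
  cross (Dc X) (iota X a) (iota X b) = iota X (cross X a b).
Proof.
  intros. unfold cross.
  rewrite Dc_p0_iota, Dc_p1_iota, !Dc_comp_iota, Dc_pair_iota by solve_ok. reflexivity.
Qed.

Lemma Dc_Pnm_iota n : forall {A B} (a : Hom X A B), ok a ->
  Pnm (R:=Dc X) n (iota X a) = iota X (Pnm n a).
Proof.
  induction n as [|n IH]; intros A B a Ha; [reflexivity|].
  change (Pnm (R:=Dc X) n (Pm (Dc X) (iota X a)) = iota X (Pnm n (Pm X a))).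
  unfold Pm. rewrite Dc_cross_iota by solve_ok. apply IH; solve_ok.
Qed.

Lemma Dc_iseq_iota n : forall A : Ob X, iseq (R:=Dc X) n A = iota X (iseq n A).
Proof.
  induction n as [|n IH]; intros A.
  - apply Dc_id_iota.
  - change (@comp (Dc X) _ _ _ (iseq (R:=Dc X) n (P A)) (iota X (p1 A A))
            = iota X (iseq n (P A) ;; p1 A A)).
    rewrite IH. apply Dc_comp_iota; [exact (ok_iseq X HX n (P A)) | solve_ok].
Qed.

Lemma Dc_ellmap_iota (Y : Ob X) : ellmap (Dc X) Y = iota X (ellmap X Y).
Proof.
  unfold ellmap. rewrite Dc_id_iota, Dc_zero_iota.
  rewrite !Dc_pair_iota by solve_ok. apply Dc_cross_iota; solve_ok.
Qed.

Lemma Dc_cmap_iota (Y : Ob X) : cmap (Dc X) Y = iota X (cmap X Y).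
Proof.
  unfold cmap. rewrite !Dc_p0_iota, !Dc_p1_iota, !Dc_comp_iota, !Dc_pair_iota by solve_ok.
  reflexivity.
Qed.

Lemma lact_derivs {A' A B} (h : Hom X A' A) (g : preseq X A B) : ok h -> ok_seq X g ->
  lact (Dc X) (iota X h) (derivs g) = derivs (lact X h g).
Proof.
  intros. extensionality k. unfold derivs. rewrite Dn_lact.
  change (compps X (Pnm (R:=Dc X) k (iota X h)) (Dn k g) = lact X (Pnm k h) (Dn k g)).
  rewrite Dc_Pnm_iota by solve_ok. apply iota_compps; solve_ok.
Qed.

Lemma addps_derivs {A B} (f g : preseq X A B) :
  addps (Dc X) (derivs f) (derivs g) = derivs (addps X f g).
Proof.
  extensionality k. change (addps X (Dn k f) (Dn k g) = Dn k (addps X f g)).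
  symmetry. apply Dn_addps.
Qed.

Lemma zerops_derivs {A B : Ob X} : zerops (Dc X) (A:=A) (B:=B) = derivs (zerops X).
Proof.
  extensionality k. change (zerops X = Dn k (zerops X (A:=A) (B:=B))). symmetry. apply Dn_zerops.
Qed.

Lemma diff_axioms_derivs {A B} (g : preseq X A B) : ok_seq X g ->
  diff_axioms X g -> diff_axioms (Dc X) (derivs g).
Proof.
  intros Hg [g1 [g2 [g3 g4]]]. unfold diff_axioms.
  rewrite !Dc_id_iota, !Dc_zero_iota, !Dc_p0_iota, !Dc_p1_iota, !Dc_add_iota,
    !Dc_pair_iota, !Dc_cross_iota, Dc_ellmap_iota, Dc_cmap_iota by solve_ok.
  change (Dps (Dc X) (derivs g)) with (derivs (Dps X g)).
  change (Dps (Dc X) (derivs (Dps X g))) with (derivs (Dps X (Dps X g))).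
  rewrite !lact_derivs, addps_derivs, zerops_derivs, g1, g2, g3, g4 by solve_ok.
  repeat split.
Qed.

Lemma okD_derivs {A B} (f : preseq X A B) : okD X f -> okD (Dc X) (derivs f).
Proof.
  intros [Hf Df]. split.
  - intro n. change (okD X (Dn n f)). split; [solve_ok | apply Dseq_Dn; assumption].
  - apply Dseq_of_diff_axioms. intro n. rewrite Dn_derivs.
    apply diff_axioms_derivs; [solve_ok | exact (Dseq_diff_axioms _ _ (Dseq_Dn X n f Df) 0)].
Qed.

Lemma Tps_derivs {A B} (f : preseq X A B) : ok_seq X f -> Tps (Dc X) (derivs f) = derivs (Tps X f).
Proof.
  intros Hf. extensionality k. unfold derivs.
  change (Tps X f) with (pairps X (lact X (p0 A A) f) (Dps X f)).
  rewrite Dn_pairps, Dn_lact.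
  change (pairps X (compps X (Pnm (R:=Dc X) k (iota X (p0 A A))) (Dn k f)) (Dn (S k) f)
          = pairps X (lact X (Pnm k (p0 A A)) (Dn k f)) (Dn k (Dps X f))).
  rewrite Dc_Pnm_iota, iota_compps by solve_ok. reflexivity.
Qed.

Lemma Tn_derivs n : forall {A B} (f : preseq X A B), ok_seq X f ->
  Tn (Dc X) n (derivs f) = derivs (Tn X n f).
Proof.
  induction n as [|n IH]; intros; simpl; [reflexivity|].
  rewrite Tps_derivs by solve_ok. apply IH; solve_ok.
Qed.

Lemma eps_sfun : is_sfun (eps X).
Proof.
  constructor; simpl; intros; try reflexivity.
  - destruct H as [Hf _]. exact (Hf 0).
  - apply (comp_id_l _ HX); solve_ok.
  - apply (comp_id_l _ HX); solve_ok.
Qed.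

Lemma delta_sfun : is_sfun (delta X).
Proof.
  constructor; simpl; intros.
  - apply okD_derivs; assumption.
  - extensionality n. change (Dn n (fun k => iseq k A) = iseq (R:=Dc X) n A).
    rewrite iseq_iota, Dn_iota, Dc_iseq_iota, (comp_id_r _ HX) by solve_ok. reflexivity.
  - destruct H as [Hf _]. extensionality n. rewrite Dn_compps.
    change (compps X (Tn X n f) (Dn n g) = compps X (Tn (Dc X) n (derivs f) 0) (Dn n g)).
    rewrite Tn_derivs by assumption. reflexivity.
  - extensionality n. apply Dn_addps.
  - extensionality n. apply Dn_zerops.
  - extensionality n.
    change (Dn n (iota X (p0 A B)) = compps X (iseq (R:=Dc X) n (prod X A B)) (iota X (p0 A B))).
    rewrite Dn_iota, Dc_iseq_iota, compps_iota, ract_iota by solve_ok. reflexivity.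
  - extensionality n.
    change (Dn n (iota X (p1 A B)) = compps X (iseq (R:=Dc X) n (prod X A B)) (iota X (p1 A B))).
    rewrite Dn_iota, Dc_iseq_iota, compps_iota, ract_iota by solve_ok. reflexivity.
Qed.

End Comultiplication.

Section Transport.
Variable R : RawCLAC.

Lemma castH_comp {A A' B B' C C' : Ob R} (e1 : A = A') (e2 : B = B') (e3 : C = C')
  (f : Hom R A B) (g : Hom R B C) :
  castH e1 e2 f ;; castH e2 e3 g = castH e1 e3 (f ;; g).
Proof. destruct e1, e2, e3. reflexivity. Qed.

Lemma ok_castH {A A' B B' : Ob R} (e1 : A = A') (e2 : B = B') (f : Hom R A B) :
  ok f -> ok (castH e1 e2 f).
Proof. destruct e1, e2. trivial. Qed.

Lemma castH_castH {A A' A'' B B' B'' : Ob R} (a : A' = A'') (b : B' = B'') (c : A = A') (d : B = B')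
  (f : Hom R A B) : castH a b (castH c d f) = castH (eq_trans c a) (eq_trans d b) f.
Proof. destruct a, b, c, d. reflexivity. Qed.

Lemma castH_irrelevant {A A' B B' : Ob R} (e1 e1' : A = A') (e2 e2' : B = B') (f : Hom R A B) :
  castH e1 e2 f = castH e1' e2' f.
Proof. rewrite (UIP _ _ _ e1 e1'), (UIP _ _ _ e2 e2'). reflexivity. Qed.

Lemma castH_refl {A B : Ob R} (e1 : A = A) (e2 : B = B) (f : Hom R A B) : castH e1 e2 f = f.
Proof. exact (castH_irrelevant e1 eq_refl e2 eq_refl f). Qed.

Lemma castH_id {A A' : Ob R} (e : A = A') : castH e e (idm A) = idm A'.
Proof. destruct e. reflexivity. Qed.

Lemma castH_zero {A A' B B' : Ob R} (e1 : A = A') (e2 : B = B') : castH e1 e2 (@zero R A B) = zero.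
Proof. destruct e1, e2. reflexivity. Qed.

Lemma castH_add {A A' B B' : Ob R} (e1 : A = A') (e2 : B = B') (f g : Hom R A B) :
  castH e1 e2 (f ⊕ g) = castH e1 e2 f ⊕ castH e1 e2 g.
Proof. destruct e1, e2. reflexivity. Qed.

Lemma castH_sym {A A' B B' : Ob R} (e1 : A = A') (e2 : B = B') (f : Hom R A B) (g : Hom R A' B') :
  castH e1 e2 f = g -> f = castH (eq_sym e1) (eq_sym e2) g.
Proof. destruct e1, e2. trivial. Qed.

End Transport.

Lemma castH_Dc (X : RawCLAC) {A A' B B' : Ob X} (e1 : A = A') (e2 : B = B') (g : preseq X A B) :
  castH (R:=Dc X) e1 e2 g = fun n => castH (f_equal (Pn n) e1) e2 (g n).
Proof. destruct e1, e2. reflexivity. Qed.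

Lemma castH_Fm {X Y : RawCLAC} (G : RawFun X Y) {A A' B B' : Ob X} (e1 : A = A') (e2 : B = B')
  (f : Hom X A B) : Fm G (castH e1 e2 f) = castH (f_equal (Fo G) e1) (f_equal (Fo G) e2) (Fm G f).
Proof. destruct e1, e2. reflexivity. Qed.

Section Images.
Variables X Y : RawCLAC.
Hypothesis HX : is_CLAC X.
Hypothesis HY : is_CLAC Y.
Variable F : RawFun X Y.
Hypothesis HF : is_sfun F.

(* Keeping the equations of objects abstract avoids computing with [FPn] and
   [Fprod]; by UIP the transported map does not depend on them. *)
Definition image_of {A0 B0 A B} (h0 : Hom X A0 B0) (h : Hom Y A B) : Prop :=
  ok h0 /\ exists (e1 : Fo F A0 = A) (e2 : Fo F B0 = B), h = castH e1 e2 (Fm F h0).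

Lemma image_of_ok {A0 B0 A B} (h0 : Hom X A0 B0) (h : Hom Y A B) : image_of h0 h -> ok h.
Proof. intros [H0 [e1 [e2 ->]]]. apply ok_castH, (fm_ok F HF), H0. Qed.

Lemma image_of_src {A0 B0 A B} (h0 : Hom X A0 B0) (h : Hom Y A B) : image_of h0 h -> Fo F A0 = A.
Proof. intros [_ [e1 _]]. exact e1. Qed.

Lemma image_of_tgt {A0 B0 A B} (h0 : Hom X A0 B0) (h : Hom Y A B) : image_of h0 h -> Fo F B0 = B.
Proof. intros [_ [_ [e2 _]]]. exact e2. Qed.

Lemma image_of_unique {A0 B0 A B} (h0 : Hom X A0 B0) (h h' : Hom Y A B) :
  image_of h0 h -> image_of h0 h' -> h = h'.
Proof. intros [_ [e1 [e2 ->]]] [_ [e1' [e2' ->]]]. apply castH_irrelevant. Qed.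

Lemma image_of_castH {A0 B0 A B A' B'} (h0 : Hom X A0 B0) (h : Hom Y A B)
  (a : A = A') (b : B = B') :
  image_of h0 h -> image_of h0 (castH a b h).
Proof.
  intros [H0 [e1 [e2 ->]]]. split; [exact H0|].
  exists (eq_trans e1 a), (eq_trans e2 b). apply castH_castH.
Qed.

Lemma image_of_comp {A0 B0 C0 A B C} (f0 : Hom X A0 B0) (g0 : Hom X B0 C0)
  (f : Hom Y A B) (g : Hom Y B C) : image_of f0 f -> image_of g0 g -> image_of (f0 ;; g0) (f ;; g).
Proof.
  intros [Hf0 [e1 [e2 ->]]] [Hg0 [e2' [e3 ->]]]. split; [solve_ok|].
  rewrite (UIP _ _ _ e2' e2). exists e1, e3.
  rewrite castH_comp, (fm_comp F HF) by assumption. reflexivity.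
Qed.

Lemma image_of_id {A0 A} (e : Fo F A0 = A) : image_of (idm A0) (idm A).
Proof. split; [solve_ok|]. exists e, e. rewrite (fm_id F HF). symmetry. apply castH_id. Qed.

Lemma image_of_zero {A0 B0 A B} (e1 : Fo F A0 = A) (e2 : Fo F B0 = B) :
  image_of (@zero X A0 B0) (@zero Y A B).
Proof. split; [solve_ok|]. exists e1, e2. rewrite (fm_zero F HF). symmetry. apply castH_zero. Qed.

Lemma image_of_add {A0 B0 A B} (f0 g0 : Hom X A0 B0) (f g : Hom Y A B) :
  image_of f0 f -> image_of g0 g -> image_of (f0 ⊕ g0) (f ⊕ g).
Proof.
  intros [Hf0 [e1 [e2 ->]]] [Hg0 [e1' [e2' ->]]]. split; [solve_ok|].
  rewrite (UIP _ _ _ e1' e1), (UIP _ _ _ e2' e2). exists e1, e2.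
  rewrite (fm_add F HF) by assumption. symmetry. apply castH_add.
Qed.

Lemma image_of_p0 {A0 B0 A B} (e1 : Fo F A0 = A) (e2 : Fo F B0 = B) :
  image_of (p0 A0 B0) (p0 A B).
Proof.
  split; [solve_ok|]. destruct e1, e2. exists (Fprod F A0 B0), eq_refl.
  symmetry. exact (fm_p0 F HF A0 B0).
Qed.

Lemma image_of_p1 {A0 B0 A B} (e1 : Fo F A0 = A) (e2 : Fo F B0 = B) :
  image_of (p1 A0 B0) (p1 A B).
Proof.
  split; [solve_ok|]. destruct e1, e2. exists (Fprod F A0 B0), eq_refl.
  symmetry. exact (fm_p1 F HF A0 B0).
Qed.

Lemma Fm_pair {C0 A0 B0} (f0 : Hom X C0 A0) (g0 : Hom X C0 B0) : ok f0 -> ok g0 ->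
  castH eq_refl (Fprod F A0 B0) (Fm F (pair f0 g0)) = pair (Fm F f0) (Fm F g0).
Proof.
  intros. apply (pair_ext Y HY).
  - apply ok_castH, (fm_ok F HF). solve_ok.
  - apply (ok_pair _ HY); apply (fm_ok F HF); assumption.
  - rewrite (pair_p0 _ HY), <- (fm_p0 F HF A0 B0), castH_comp, <- (fm_comp F HF), (pair_p0 _ HX)
      by (try apply (fm_ok F HF); solve_ok).
    reflexivity.
  - rewrite (pair_p1 _ HY), <- (fm_p1 F HF A0 B0), castH_comp, <- (fm_comp F HF), (pair_p1 _ HX)
      by (try apply (fm_ok F HF); solve_ok).
    reflexivity.
Qed.

Lemma image_of_pair {C0 A0 B0 C A B} (f0 : Hom X C0 A0) (g0 : Hom X C0 B0)
  (f : Hom Y C A) (g : Hom Y C B) :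
  image_of f0 f -> image_of g0 g -> image_of (pair f0 g0) (pair f g).
Proof.
  intros [Hf0 [e1 [e2 ->]]] [Hg0 [e1' [e3 ->]]]. split; [solve_ok|].
  rewrite (UIP _ _ _ e1' e1). destruct e1, e2, e3. exists eq_refl, (Fprod F A0 B0).
  symmetry. apply Fm_pair; assumption.
Qed.

Lemma image_of_cross {A0 B0 A0' B0' A B A' B'} (a0 : Hom X A0 A0') (b0 : Hom X B0 B0')
  (a : Hom Y A A') (b : Hom Y B B') :
  image_of a0 a -> image_of b0 b -> image_of (cross X a0 b0) (cross Y a b).
Proof.
  intros Ha Hb. pose proof (image_of_src _ _ Ha). pose proof (image_of_src _ _ Hb).
  unfold cross. apply image_of_pair; apply image_of_comp; auto using image_of_p0, image_of_p1.
Qed.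

Lemma image_of_Pnm n : forall {A0 B0 A B} (h0 : Hom X A0 B0) (h : Hom Y A B),
  image_of h0 h -> image_of (Pnm n h0) (Pnm n h).
Proof.
  induction n as [|n IH]; intros; simpl; [assumption|].
  apply IH, image_of_cross; assumption.
Qed.

Lemma image_of_iseq n : forall {A0 A}, Fo F A0 = A -> image_of (iseq n A0) (iseq n A).
Proof.
  induction n as [|n IH]; intros A0 A e; simpl; [apply image_of_id, e|].
  apply image_of_comp; [apply IH | apply image_of_p1; exact e].
  destruct e. exact (Fprod F A0 A0).
Qed.

Definition seq_image_of {A0 B0 A B} (g0 : preseq X A0 B0) (g : preseq Y A B) : Prop :=
  forall n, image_of (g0 n) (g n).

Lemma seq_image_of_unique {A0 B0 A B} (g0 g0' : preseq X A0 B0) (g g' : preseq Y A B) :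
  g0 = g0' -> seq_image_of g0 g -> seq_image_of g0' g' -> g = g'.
Proof.
  intros <- H H'. extensionality n. exact (image_of_unique _ _ _ (H n) (H' n)).
Qed.

Lemma seq_image_of_ok {A0 B0 A B} (g0 : preseq X A0 B0) (g : preseq Y A B) :
  seq_image_of g0 g -> ok_seq Y g.
Proof. intros H n. exact (image_of_ok _ _ (H n)). Qed.

Lemma seq_image_of_src {A0 B0 A B} (g0 : preseq X A0 B0) (g : preseq Y A B) :
  seq_image_of g0 g -> Fo F A0 = A.
Proof. intros H. exact (image_of_src _ _ (H 0)). Qed.

Lemma seq_image_of_tgt {A0 B0 A B} (g0 : preseq X A0 B0) (g : preseq Y A B) :
  seq_image_of g0 g -> Fo F B0 = B.
Proof. intros H. exact (image_of_tgt _ _ (H 0)). Qed.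

Lemma seq_image_of_lact {A0' A0 B0 A' A B} (h0 : Hom X A0' A0) (h : Hom Y A' A)
  (g0 : preseq X A0 B0) (g : preseq Y A B) :
  image_of h0 h -> seq_image_of g0 g -> seq_image_of (lact X h0 g0) (lact Y h g).
Proof. intros Hh Hg n. apply image_of_comp; [apply image_of_Pnm|]; auto. Qed.

Lemma seq_image_of_Dps {A0 B0 A B} (g0 : preseq X A0 B0) (g : preseq Y A B) :
  seq_image_of g0 g -> seq_image_of (Dps X g0) (Dps Y g).
Proof. intros H n. exact (H (S n)). Qed.

Lemma seq_image_of_Dn n : forall {A0 B0 A B} (g0 : preseq X A0 B0) (g : preseq Y A B),
  seq_image_of g0 g -> seq_image_of (Dn n g0) (Dn n g).
Proof. induction n; intros; simpl; auto using seq_image_of_Dps. Qed.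

Lemma seq_image_of_addps {A0 B0 A B} (f0 g0 : preseq X A0 B0) (f g : preseq Y A B) :
  seq_image_of f0 f -> seq_image_of g0 g -> seq_image_of (addps X f0 g0) (addps Y f g).
Proof. intros Hf Hg n. apply image_of_add; auto. Qed.

Lemma seq_image_of_zerops {A0 B0 A B} (e1 : Fo F A0 = A) (e2 : Fo F B0 = B) :
  seq_image_of (zerops X (A:=A0) (B:=B0)) (zerops Y (A:=A) (B:=B)).
Proof.
  intros n. apply image_of_zero; [|exact e2].
  clear e2. revert A0 A e1. induction n as [|n IH]; intros A0 A e1; [exact e1|].
  apply IH. destruct e1. exact (Fprod F A0 A0).
Qed.

Lemma seq_image_of_pairps {C0 A0 B0 C A B} (f0 : preseq X C0 A0) (g0 : preseq X C0 B0)
  (f : preseq Y C A) (g : preseq Y C B) :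
  seq_image_of f0 f -> seq_image_of g0 g -> seq_image_of (pairps X f0 g0) (pairps Y f g).
Proof. intros Hf Hg n. apply image_of_pair; auto. Qed.

Lemma seq_image_of_Tps {A0 B0 A B} (g0 : preseq X A0 B0) (g : preseq Y A B) :
  seq_image_of g0 g -> seq_image_of (Tps X g0) (Tps Y g).
Proof.
  intros H. pose proof (seq_image_of_src _ _ H) as e.
  change (seq_image_of (pairps X (lact X (p0 A0 A0) g0) (Dps X g0))
                       (pairps Y (lact Y (p0 A A) g) (Dps Y g))).
  apply seq_image_of_pairps; [apply seq_image_of_lact | apply seq_image_of_Dps]; auto.
  apply image_of_p0; exact e.
Qed.

Lemma seq_image_of_Tn n : forall {A0 B0 A B} (g0 : preseq X A0 B0) (g : preseq Y A B),
  seq_image_of g0 g -> seq_image_of (Tn X n g0) (Tn Y n g).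
Proof. induction n; intros; simpl; auto using seq_image_of_Tps. Qed.

Lemma seq_image_of_compps {A0 B0 C0 A B C} (f0 : preseq X A0 B0) (g0 : preseq X B0 C0)
  (f : preseq Y A B) (g : preseq Y B C) :
  seq_image_of f0 f -> seq_image_of g0 g -> seq_image_of (compps X f0 g0) (compps Y f g).
Proof. intros Hf Hg n. apply image_of_comp; [apply (seq_image_of_Tn n _ _ Hf 0) | apply Hg]. Qed.

Lemma seq_image_of_iota {A0 B0 A B} (h0 : Hom X A0 B0) (h : Hom Y A B) :
  image_of h0 h -> seq_image_of (iota X h0) (iota Y h).
Proof.
  intros H n. apply image_of_comp; [apply image_of_iseq, (image_of_src _ _ H) | exact H].
Qed.

Lemma diff_axioms_image {A0 B0 A B} (f0 : preseq X A0 B0) (f : preseq Y A B) :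
  seq_image_of f0 f -> diff_axioms X f0 -> diff_axioms Y f.
Proof.
  intros H [f1 [f2 [f3 f4]]].
  pose proof (seq_image_of_src _ _ H) as eA. pose proof (seq_image_of_tgt _ _ H) as eB.
  pose proof (seq_image_of_Dps _ _ H) as D1. pose proof (seq_image_of_Dps _ _ D1) as D2.
  pose proof (image_of_id eA) as Hid. pose proof (@image_of_zero A0 A0 A A eA eA) as H0.
  pose proof (image_of_p0 eA eA) as Hp0. pose proof (image_of_p1 eA eA) as Hp1.
  repeat split.
  - refine (seq_image_of_unique _ _ _ _ f1 (seq_image_of_lact _ _ _ _ _ D1)
              (seq_image_of_zerops eA eB)).
    apply image_of_pair; assumption.
  - refine (seq_image_of_unique _ _ _ _ f2 (seq_image_of_lact _ _ _ _ _ D1)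
              (seq_image_of_addps _ _ _ _ (seq_image_of_lact _ _ _ _ _ D1)
                 (seq_image_of_lact _ _ _ _ _ D1)));
      apply image_of_cross; auto using image_of_add.
  - refine (seq_image_of_unique _ _ _ _ f3 (seq_image_of_lact _ _ _ _ _ D2) D1).
    unfold ellmap. apply image_of_cross; apply image_of_pair; assumption.
  - refine (seq_image_of_unique _ _ _ _ f4 (seq_image_of_lact _ _ _ _ _ D2) D2).
    assert (eP : Fo F (P A0) = P A) by (destruct eA; exact (Fprod F A0 A0)).
    unfold cmap.
    repeat apply image_of_pair;
      apply image_of_comp; first [apply image_of_p0 | apply image_of_p1]; assumption.
Qed.

Lemma seq_image_of_DF {A B} (f : preseq X A B) : ok_seq X f -> seq_image_of f (Fm (DF F) f).
Proof. intros Hf n. split; [apply Hf|]. exists (FPn F n A), eq_refl. reflexivity. Qed.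

Lemma DF_sfun : is_sfun (DF F).
Proof.
  constructor; intros.
  - destruct H as [Hf Df]. pose proof (seq_image_of_DF f Hf) as Hi. split.
    + exact (seq_image_of_ok _ _ Hi).
    + apply Dseq_of_diff_axioms. intro n.
      apply (diff_axioms_image (Dn n f)); [apply seq_image_of_Dn, Hi | apply Dseq_diff_axioms, Df].
  - refine (seq_image_of_unique _ _ _ _ eq_refl (seq_image_of_DF _ _) _); [solve_ok|].
    intro n. apply image_of_iseq. reflexivity.
  - destruct H as [Hf _], H0 as [Hg _].
    refine (seq_image_of_unique (compps X f g) _ _ _ eq_refl (seq_image_of_DF _ _) _); [solve_ok|].
    apply seq_image_of_compps; apply seq_image_of_DF; assumption.
  - destruct H as [Hf _], H0 as [Hg _].
    refine (seq_image_of_unique (addps X f g) _ _ _ eq_refl (seq_image_of_DF _ _) _); [solve_ok|].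
    apply seq_image_of_addps; apply seq_image_of_DF; assumption.
  - refine (seq_image_of_unique (zerops X) _ _ _ eq_refl (seq_image_of_DF _ _) _); [solve_ok|].
    apply seq_image_of_zerops; reflexivity.
  - simpl. rewrite castH_Dc.
    refine (seq_image_of_unique (iota X (@p0 X A B)) _ _ _ eq_refl _
              (seq_image_of_iota _ _ (image_of_p0 eq_refl eq_refl))).
    intro n. apply image_of_castH, (seq_image_of_DF (iota X (@p0 X A B))). solve_ok.
  - simpl. rewrite castH_Dc.
    refine (seq_image_of_unique (iota X (@p1 X A B)) _ _ _ eq_refl _
              (seq_image_of_iota _ _ (image_of_p1 eq_refl eq_refl))).
    intro n. apply image_of_castH, (seq_image_of_DF (iota X (@p1 X A B))). solve_ok.
Qed.

End Images.

Lemma DF_feq (X Y : RawCLAC) (F G : RawFun X Y) : is_CLAC X -> is_CLAC Y ->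
  is_sfun F -> is_sfun G -> feq F G -> feq (DF F) (DF G).
Proof.
  intros HX HY HF HG [eo Heo]. exists eo. intros A B f [Hf _]. simpl. rewrite castH_Dc.
  refine (seq_image_of_unique X Y G f _ _ _ eq_refl _ (seq_image_of_DF X Y G f Hf)).
  intro n. apply image_of_castH, image_of_castH. split; [apply Hf|].
  rewrite (castH_sym _ _ _ _ _ (Heo _ _ (f n) (Hf n))).
  exists (eq_sym (eo (Pn n A))), (eq_sym (eo B)). reflexivity.
Qed.

Lemma DF_id (X : RawCLAC) : feq (DF (idF X)) (idF (Dc X)).
Proof.
  exists (fun A => eq_refl). intros A B f _. simpl. extensionality n. apply castH_refl.
Qed.

Lemma DF_comp (X Y Z : RawCLAC) (F : RawFun X Y) (G : RawFun Y Z) :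
  feq (DF (compF F G)) (compF (DF F) (DF G)).
Proof.
  exists (fun A => eq_refl). intros A B f _. simpl. extensionality n.
  rewrite castH_Fm, castH_castH. apply castH_irrelevant.
Qed.

Lemma eps_natural (X Y : RawCLAC) (F : RawFun X Y) : feq (compF (DF F) (eps Y)) (compF (eps X) F).
Proof. exists (fun A => eq_refl). reflexivity. Qed.

Lemma delta_natural (X Y : RawCLAC) (F : RawFun X Y) : is_CLAC X -> is_CLAC Y -> is_sfun F ->
  feq (compF (delta X) (DF (DF F))) (compF (DF F) (delta Y)).
Proof.
  intros HX HY HF. exists (fun A => eq_refl). intros A B f [Hf _].
  simpl. extensionality n. rewrite (castH_Dc Y (FPn (DF F) n A)).
  refine (seq_image_of_unique X Y F (Dn n f) _ _ _ eq_refl _ _).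
  - intro k. apply image_of_castH, (seq_image_of_DF X Y F (Dn n f)); solve_ok.
  - exact (seq_image_of_Dn X Y F n _ _ (seq_image_of_DF X Y F f Hf)).
Qed.

Lemma delta_eps_Dc (X : RawCLAC) : feq (compF (delta X) (eps (Dc X))) (idF (Dc X)).
Proof. exists (fun A => eq_refl). reflexivity. Qed.

Lemma delta_DF_eps (X : RawCLAC) : feq (compF (delta X) (DF (eps X))) (idF (Dc X)).
Proof.
  exists (fun A => eq_refl). intros A B f _. simpl. extensionality n.
  rewrite castH_refl. apply Dn_0.
Qed.

Lemma delta_coassoc (X : RawCLAC) :
  feq (compF (delta X) (delta (Dc X))) (compF (delta X) (DF (delta X))).
Proof.
  exists (fun A => eq_refl). intros A B f _. simpl. extensionality n.
  rewrite castH_refl. apply Dn_derivs.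
Qed.

Theorem proposition4p14 : is_comonad_on_CLAC Dc (@DF) eps delta.
Proof.
  unfold is_comonad_on_CLAC. repeat match goal with |- _ /\ _ => split end.
  - exact Dc_CLAC.
  - intros. apply DF_sfun; assumption.
  - intros. apply DF_feq; assumption.
  - intros. apply DF_id.
  - intros. apply DF_comp.
  - exact eps_sfun.
  - exact delta_sfun.
  - intros. apply eps_natural.
  - exact delta_natural.
  - intros. apply delta_eps_Dc.
  - intros. apply delta_DF_eps.
  - intros. apply delta_coassoc.
Qed.
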